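(* Let $C_{drel}>0$ be a constant such that for all $\mathcal{T}\in\mathbb{T}$ and all refinements $\mathcal{T}_*\in\mathbb{T}$ of $\mathcal{T}$, $\|u_{\mathcal{T}_*}-u_{\mathcal{T}}\|^2_{H^1(\Omega)}\le C_{drel}\,\eta^2_{\mathcal{T}}(u_{\mathcal{T}},\mathcal{T}\setminus\mathcal{T}_* )$, and let $\delta>0$, $C_{est}>0$ be constants such that for all such $\mathcal{T},\mathcal{T}_*$, $\eta^2_{\mathcal{T}}(u_{\mathcal{T}},\mathcal{T}\cap\mathcal{T}_* )\le(1+\delta)\eta^2_{\mathcal{T}_*}(u_{\mathcal{T}_*},\mathcal{T}\cap\mathcal{T}_* )+C_{est}\|u_{\mathcal{T}_*}-u_{\mathcal{T}}\|^2_{H^1(\Omega)}$. Let $\theta\in\big(0,1/(1+C_{est}C_{drel})\big)$ and $\lambda:=\big(1-(1+C_{est}C_{drel})\theta\big)/(1+\delta)$. Let $\mathcal{T}\in\mathbb{T}$ and let $\mathcal{T}_*\in\mathbb{T}$ be any refinement of $\mathcal{T}$. If $\eta^2_{\mathcal{T}_*}(u_{\mathcal{T}_*})\le\lambda\,\eta^2_{\mathcal{T}}(u_{\mathcal{T}})$, then \[ \eta^2_{\mathcal{T}}(u_{\mathcal{T}},\mathcal{T}\setminus\mathcal{T}_* )\ge\theta\,\eta^2_{\mathcal{T}}(u_{\mathcal{T}}). \]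
   Context: Let $\Omega\subset\mathbb{R}^2$ be a bounded polygonal domain whose boundary $\Gamma$ is the union of three mutually disjoint parts $\Gamma_0,\Gamma_A,\Gamma_C$, each a line segment ($\Gamma_A,\Gamma_C$ of positive length). Let $\sigma\in L^\infty(\Omega)$ with $\sigma_1\le\sigma\le\sigma_2$ a.e. ($0<\sigma_1\le\sigma_2$), $g\in L^2(\Gamma_A)$, and $f$ either $f_1(t)=C_1t+C_2t^3$ or $f_2(t)=C_5(e^{C_3t}-e^{-C_4t})$ with positive constants $C_i$. $\mathcal{T}_0$ is a conforming shape-regular triangulation of $\bar\Omega$ with $\sigma|_K\in W^{1,\infty}(K)$ for $K\in\mathcal{T}_0$; $\mathbb{T}$ is the set of conforming triangulations obtained from $\mathcal{T}_0$ by finitely many newest vertex bisections; a refinement $\mathcal{T}_*$ of $\mathcal{T}$ is obtained from $\mathcal{T}$ by finitely many bisections; $\mathcal{T}\cap\mathcal{T}_*$ is the set of elements in both meshes and $\mathcal{T}\setminus\mathcal{T}_*$ the set of elements of $\mathcal{T}$ not in $\mathcal{T}_*$. Fix $m\ge1$; $V_{\mathcal{T}}=\{v\in H^1(\Omega):v|_K\in P_m(K)\,\forall K\in\mathcal{T}\}$, and $u_{\mathcal{T}}\in V_{\mathcal{T}}$ is the unique solution of $\int_\Omega\sigma\nabla u_{\mathcal{T}}\cdot\nabla v\,dx+\int_{\Gamma_C}f(u_{\mathcal{T}})v\,ds=\int_{\Gamma_A}gv\,ds$ for all $v\in V_{\mathcal{T}}$. Estimator: $h_K=|K|^{1/2}$;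 for an edge $F$, $n_F$ a fixed unit normal ($=n$, outward, on $\Gamma$). For $v\in V_{\mathcal{T}}$: $R_K(v)=\nabla\cdot(\sigma\nabla v)$ on $K$; $J_F(v)$ = jump of $\sigma\nabla v\cdot n_F$ across interior $F$, $\sigma\nabla v\cdot n$ on $\Gamma_0$, $g-\sigma\nabla v\cdot n$ on $\Gamma_A$, $f(v)+\sigma\nabla v\cdot n$ on $\Gamma_C$. $\eta_{\mathcal{T}}^2(v,K)=h_K^2\|R_K(v)\|^2_{L^2(K)}+\frac12\sum_{F\subset\partial K\text{ interior}}h_K\|J_F(v)\|^2_{L^2(F)}+\sum_{F\subset\partial K\cap\Gamma}h_K\|J_F(v)\|^2_{L^2(F)}$, $\eta^2_{\mathcal{T}}(v,\mathcal{M})=\sum_{K\in\mathcal{M}}\eta^2_{\mathcal{T}}(v,K)$, $\eta_{\mathcal{T}}(v)=\eta_{\mathcal{T}}(v,\mathcal{T})$. *)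

From HB Require Import structures.
From mathcomp Require Import all_boot all_order all_algebra.
From mathcomp Require Import finmap.
From mathcomp Require Import reals.
Set Implicit Arguments. Unset Strict Implicit. Unset Printing Implicit Defensive.
Import Order.TTheory GRing.Theory Num.Theory.
Local Open Scope ring_scope.


(* Abstract rendering of the AFEM setting:
   - elements of triangulations have type E; a mesh is a finite set of
     elements {fset E}; T `&` Ts and T `\` Ts are the sets of elements
     common to both meshes / of T not in Ts;
   - V is the (discrete) function space, u T : V the discrete solution u_T;
   - eta T v K is the local squared estimator eta_T^2(v,K);
   - nrm v is the H^1(Omega) norm of v. *)

Definition est (R : realType) (E : choiceType) (V : Type)
  (eta : {fset E} -> V -> E -> R) (T : {fset E}) (v : V) (M : {fset E}) : R :=
  \sum_(K <- M) eta T v K.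

From HB Require Import structures.
From mathcomp Require Import all_boot all_order all_algebra.
From mathcomp Require Import finmap.
From mathcomp Require Import reals.
From mathcomp Require Import ring lra.
Set Implicit Arguments. Unset Strict Implicit. Unset Printing Implicit Defensive.
Import Order.TTheory GRing.Theory Num.Theory.
Local Open Scope ring_scope.

(* Split eta^2_T(u_T) over T ∩ T_* and T \ T_*.  On T ∩ T_* the estimator
   perturbation and the discrete reliability bound the old contribution by
   (1 + delta) eta^2_{T_*}(u_{T_*}) + C_est C_drel eta^2_T(u_T, T \ T_* ),
   and eta^2_{T_*}(u_{T_*}, T ∩ T_* ) <= eta^2_{T_*}(u_{T_*}) <= lambda eta^2_T(u_T);
   rearranging leaves
   (1 + C_est C_drel) theta eta^2_T(u_T) <= (1 + C_est C_drel) eta^2_T(u_T, T \ T_* ). *)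

Section EstimatorSums.

Context {R : realType} {E : choiceType} {V : Type}.
Variable eta : {fset E} -> V -> E -> R.

Lemma est_fsetID (T : {fset E}) (v : V) (A B : {fset E}) :
  est eta T v A = est eta T v (A `&` B)%fset + est eta T v (A `\` B)%fset.
Proof.
rewrite /est (big_fsetID _ (mem B)); congr (_ + _); apply: eq_fbigl => K;
by rewrite !inE /= // andbC.
Qed.

Lemma est_fsetIl_le (T : {fset E}) (v : V) (A B : {fset E}) :
  (forall K, 0 <= eta T v K) -> est eta T v (A `&` B)%fset <= est eta T v B.
Proof.
move=> eta_ge0; rewrite [leRHS](est_fsetID _ _ B A) fsetIC lerDl.
exact: sumr_ge0.
Qed.

End EstimatorSums.

Lemma marking_of_reduction (R : realFieldType) (delta c theta A I D Is Ss : R) :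
  0 < 1 + delta -> 0 < 1 + c ->
  A = I + D -> I <= (1 + delta) * Is + c * D -> Is <= Ss ->
  Ss <= (1 - (1 + c) * theta) / (1 + delta) * A ->
  theta * A <= D.
Proof.
move=> delta1_gt0 c1_gt0 A_split I_le Is_le Ss_le.
have red : (1 + delta) * Ss <= (1 - (1 + c) * theta) * A.
  have -> : (1 - (1 + c) * theta) * A
            = (1 + delta) * ((1 - (1 + c) * theta) / (1 + delta) * A).
    by field; rewrite gt_eqF.
  by rewrite ler_wpM2l // ltW.
have IsSs : (1 + delta) * Is <= (1 + delta) * Ss by rewrite ler_wpM2l // ltW.
rewrite -(ler_pM2l c1_gt0); nra.
Qed.

Theorem lemma6p3 (R : realType) (E : choiceType) (V : zmodType)
  (Tadm : {fset E} -> Prop)                      (* the mesh family \mathbb{T} *)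
  (refines : {fset E} -> {fset E} -> Prop)       (* refines Ts T : Ts is a refinement of T *)
  (u : {fset E} -> V)                            (* discrete solution u_T *)
  (eta : {fset E} -> V -> E -> R)                (* local squared estimator *)
  (nrm : V -> R)                                 (* H^1(Omega) norm *)
  (eta_ge0 : forall T v K, 0 <= eta T v K)
  (Cdrel delta Cest : R)
  (Cdrel_gt0 : 0 < Cdrel) (delta_gt0 : 0 < delta) (Cest_gt0 : 0 < Cest)
  (Hdrel : forall T Ts, Tadm T -> Tadm Ts -> refines Ts T ->
     nrm (u Ts - u T) ^+ 2 <= Cdrel * est eta T (u T) (T `\` Ts)%fset)
  (Hest : forall T Ts, Tadm T -> Tadm Ts -> refines Ts T ->
     est eta T (u T) (T `&` Ts)%fset
       <= (1 + delta) * est eta Ts (u Ts) (T `&` Ts)%fset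
          + Cest * nrm (u Ts - u T) ^+ 2)
  (theta : R) (theta_gt0 : 0 < theta)
  (theta_lt : theta < 1 / (1 + Cest * Cdrel))
  (T Ts : {fset E}) (HT : Tadm T) (HTs : Tadm Ts) (Href : refines Ts T)
  (Hred : est eta Ts (u Ts) Ts
          <= (1 - (1 + Cest * Cdrel) * theta) / (1 + delta) * est eta T (u T) T) :
  theta * est eta T (u T) T <= est eta T (u T) (T `\` Ts)%fset.
Proof.
(* [theta_gt0] and [theta_lt] only make lambda positive; the argument does not use them. *)
have c_gt0 : 0 < Cest * Cdrel by rewrite mulr_gt0.
apply: (marking_of_reduction _ _ (est_fsetID _ _ _ _ Ts) _
          (est_fsetIl_le T Ts (eta_ge0 Ts _)) Hred).
- by rewrite addr_gt0.
- by rewrite addr_gt0.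
- apply: le_trans (Hest _ _ HT HTs Href) _.
  by rewrite lerD2l -mulrA ler_wpM2l ?Hdrel // ltW.
Qed.
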